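(* Let $K,s\ge1$ and let $f:\{0,1\}^s\to\mathbb Z_K$ be defined by $f(a_1,\ldots,a_s)=(\sum_{i=1}^s a_i)\bmod K$. If $s\ge K^2$, then $|f^{-1}(x)|\le\big(1+4\frac{K}{\sqrt s}\big)|f^{-1}(y)|$ for all $x,y\in\mathbb Z_K$. *)

From mathcomp Require Import all_boot all_order all_algebra.
Set Implicit Arguments. Unset Strict Implicit. Unset Printing Implicit Defensive.

(* f : {0,1}^s -> Z_K, f(a) = (sum_i a_i) mod K, with {0,1}^s = {ffun 'I_s -> bool}
   and Z_K represented by residues 'I_K = {0,...,K-1}. *)
Definition sum_mod (s K : nat) (a : {ffun 'I_s -> bool}) : nat :=
  (\sum_(i < s) nat_of_bool (a i)) %% K.

Definition fiber_card (s K : nat) (x : 'I_K) : nat :=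
  #|[set a : {ffun 'I_s -> bool} | sum_mod K a == x]|.

From mathcomp Require Import all_boot all_order all_algebra zify ring lra.
Import Order.TTheory GRing.Theory Num.Theory.
Set Implicit Arguments. Unset Strict Implicit. Unset Printing Implicit Defensive.

(* The fiber over x is sum_k C(s, x + kK).  For x <= y the indices x + kK and y + kK
   interleave (for y < x, compare with y + (k+1)K instead); as j |-> C(s, j) is unimodal,
   every term of one fiber is dominated by a neighbouring term of the other, except the
   one term straddling the peak, so |f^-1(x)| <= |f^-1(y)| + C(s, s/2).  Summing over
   the K fibers gives 2^s <= K (|f^-1(y)| + C(s, s/2)); with the central binomial
   estimate 5 sqrt(s) C(s, s/2) <= 4 2^s and K <= sqrt(s) this yields
   sqrt(s) C(s, s/2) <= 4 K |f^-1(y)|. *)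

Definition weight s (a : {ffun 'I_s -> bool}) : nat := \sum_(i < s) a i.

Lemma weight_card s (a : {ffun 'I_s -> bool}) : weight a = #|[set i | a i]|.
Proof. by rewrite -sum1dep_card big_mkcond; apply: eq_bigr => i _; case: (a i). Qed.

Lemma weight_le s (a : {ffun 'I_s -> bool}) : weight a <= s.
Proof. by rewrite weight_card -[X in _ <= X](card_ord s) max_card. Qed.

Lemma card_weight_eq s j :
  #|[set a : {ffun 'I_s -> bool} | weight a == j]| = 'C(s, j).
Proof.
rewrite -[s in RHS]card_ord -card_draws.
rewrite -(@on_card_preimset _ _ (fun a : {ffun 'I_s -> bool} => [set i | a i])).
  by apply: eq_card => a; rewrite !inE weight_card.
apply: onW_bij; exists (fun A : {set 'I_s} => [ffun i => i \in A]) => [a | A].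
  by apply/ffunP => i; rewrite ffunE inE.
by apply/setP => i; rewrite !inE ffunE.
Qed.

Lemma eqn_mod_div w x k K :
  x < K -> (w == x + k * K) = (w %% K == x) && (w %/ K == k).
Proof.
move=> ltxK; apply/eqP/andP => [-> | [/eqP <- /eqP <-]]; last by rewrite addnC -divn_eq.
have K_gt0 : 0 < K by apply: leq_ltn_trans ltxK.
by rewrite addnC modnMDl modn_small // divnMDl // divn_small // addn0.
Qed.

Lemma fiber_card_sum_bin s K (x : 'I_K) L :
  s < L -> fiber_card s x = \sum_(k < L) 'C(s, x + k * K).
Proof.
move=> ltsL; have quoP (a : {ffun 'I_s -> bool}) : weight a %/ K < L.
  exact: leq_ltn_trans (leq_div _ _) (leq_ltn_trans (weight_le a) ltsL).
rewrite /fiber_card -sum1dep_card (partition_big (fun a => Ordinal (quoP a)) xpredT) //=.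
apply: eq_bigr => k _; rewrite -card_weight_eq -sum1dep_card; apply: eq_bigl => a.
by rewrite -val_eqE /= eqn_mod_div.
Qed.

Lemma sum_fiber_card s K : 0 < K -> \sum_(z < K) fiber_card s z = 2 ^ s.
Proof.
move=> K_gt0; have remP (a : {ffun 'I_s -> bool}) : sum_mod K a < K by exact: ltn_pmod.
rewrite -[2]card_bool -[s in _ ^ s]card_ord -card_ffun -sum1_card.
rewrite (partition_big (fun a => Ordinal (remP a)) xpredT) //=.
apply: eq_bigr => z _; rewrite /fiber_card -sum1dep_card; apply: eq_bigl => a.
by rewrite -val_eqE.
Qed.

Section InterleavedSums.

Variables (f : nat -> nat) (m : nat).
Hypothesis f_up : forall i j, i <= j <= m -> f i <= f j.
Hypothesis f_dn : forall i j, m <= i <= j -> f j <= f i.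

Lemma leq_peak i : f i <= f m.
Proof.
case: (leqP i m) => [le_im | /ltnW le_mi]; first by apply: f_up; rewrite le_im leqnn.
by apply: f_dn; rewrite le_mi leqnn.
Qed.

Variables u v : nat -> nat.
Hypothesis uv_interleaved : forall k, u k <= v k <= u k.+1.

Lemma interleaved_homo : {homo v : i j / i <= j}.
Proof.
apply: homo_leq => [//|? ? ?|k]; first exact: leq_trans.
case/andP: (uv_interleaved k) => _ le_vu; case/andP: (uv_interleaved k.+1) => le_uv _.
exact: leq_trans le_vu le_uv.
Qed.

Lemma sum_interleaved_below L :
  v L <= m -> \sum_(k < L.+1) f (u k) <= \sum_(k < L.+1) f (v k).
Proof.
move=> le_vL_m; apply: leq_sum => k _; case/andP: (uv_interleaved k) => le_uv _.
by apply: f_up; rewrite le_uv (leq_trans (interleaved_homo (ltnSE (ltn_ord k))) le_vL_m).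
Qed.

Lemma sum_interleaved_shift L :
  \sum_(k < L.+1) f (u k) <= \sum_(k < L) f (v k) + f m.
Proof.
elim: L => [|L IH]; first by rewrite big_ord1 big_ord0 leq_peak.
rewrite big_ord_recr /=; case: (leqP m (v L)) => [le_m_vL | /ltnW le_vL_m].
  rewrite [in X in _ <= X]big_ord_recr /= addnAC leq_add //.
  by case/andP: (uv_interleaved L) => _ le_vu; apply: f_dn; rewrite le_m_vL.
exact: leq_add (sum_interleaved_below le_vL_m) (leq_peak _).
Qed.

Lemma sum_interleaved_le L :
  \sum_(k < L) f (u k) <= \sum_(k < L) f (v k) + f m.
Proof.
case: L => [|L]; first by rewrite !big_ord0.
by apply: leq_trans (sum_interleaved_shift L) _; rewrite big_ord_recr leq_add2r leq_addr.
Qed.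

End InterleavedSums.

Lemma leq_bin_succ_below_half s j : j < s./2 -> 'C(s, j) <= 'C(s, j.+1).
Proof.
move=> lt_j_half; rewrite -(leq_pmul2l (ltn0Sn j)) mul_bin_left leq_mul2r.
by apply/orP; right; rewrite -divn2 in lt_j_half; lia.
Qed.

Lemma leq_bin_succ_above_half s j : s./2 <= j -> 'C(s, j.+1) <= 'C(s, j).
Proof.
move=> le_half_j; rewrite -(leq_pmul2l (ltn0Sn j)) mul_bin_left leq_mul2r.
by apply/orP; right; rewrite -divn2 in le_half_j; lia.
Qed.

Lemma leq_bin_below_half s i j : i <= j <= s./2 -> 'C(s, i) <= 'C(s, j).
Proof.
case/andP=> /subnKC <-; elim: (j - i) => [|d IH]; first by rewrite addn0.
rewrite addnS => lt_half; apply: leq_trans (IH (ltnW lt_half)) _.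
exact: leq_bin_succ_below_half.
Qed.

Lemma leq_bin_above_half s i j : s./2 <= i <= j -> 'C(s, j) <= 'C(s, i).
Proof.
case/andP=> le_half_i /subnKC <-; elim: (j - i) => [|d IH]; first by rewrite addn0.
rewrite addnS; apply: leq_trans _ IH; apply: leq_bin_succ_above_half.
exact: leq_trans le_half_i (leq_addr _ _).
Qed.

Lemma mul_bin_center n : n.+1 * 'C(n.*2.+2, n.+1) = 2 * n.*2.+1 * 'C(n.*2, n).
Proof.
have diag := mul_bin_diag n.*2.+2 n; have down := mul_bin_down n.*2.+1 n.
rewrite /= (_ : n.*2.+1 - n = n.+1) in down; last by rewrite -addnn; lia.
apply/eqP; rewrite -(eqn_pmul2l (ltn0Sn n)); apply/eqP.
by rewrite -diag -[2 * _ * _]mulnA down -!mul2n; ring.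
Qed.

(* n C(2n, n)^2 / 16^n increases to 1/pi, barely below the constant 8/25 needed here;
   the quadratic correction factor makes the bound inductive. *)
Lemma bin_center_sqr_le n :
  1 < n -> 25 * 'C(n.*2, n) ^ 2 * (32 * n ^ 2 + 8 * n + 1) <= 256 * n * 16 ^ n.
Proof.
elim: n => // n IH; rewrite ltnS leq_eqVlt => /orP [/eqP <- // | lt1n].
have {}IH := IH lt1n; rewrite doubleS.
set c := 'C(n.*2, n) in IH *; set c' := 'C(n.*2.+2, n.+1).
pose Q k := 32 * k ^ 2 + 8 * k + 1; rewrite -/(Q n) in IH; rewrite -/(Q n.+1).
have poly_step : 4 * n.*2.+1 ^ 2 * n * Q n.+1 <= 16 * n.+1 ^ 3 * Q n.
  by rewrite /Q -addnn; nia.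
have pos : 0 < n.+1 ^ 2 * (n * Q n) by rewrite !muln_gt0 (ltnW lt1n) /Q addn1.
clearbody Q; rewrite -(leq_pmul2r pos).
have -> : 25 * c' ^ 2 * Q n.+1 * (n.+1 ^ 2 * (n * Q n))
        = 25 * (n.+1 * c') ^ 2 * Q n.+1 * (n * Q n) by ring.
rewrite (mul_bin_center n).
have -> : 25 * (2 * n.*2.+1 * c) ^ 2 * Q n.+1 * (n * Q n)
        = (25 * c ^ 2 * Q n) * (4 * n.*2.+1 ^ 2 * n * Q n.+1) by ring.
have -> : 256 * n.+1 * 16 ^ n.+1 * (n.+1 ^ 2 * (n * Q n))
        = (256 * n * 16 ^ n) * (16 * n.+1 ^ 3 * Q n) by rewrite expnS; ring.
exact: leq_mul IH poly_step.
Qed.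

Lemma bin_center_bound n : 0 < n -> 50 * n * 'C(n.*2, n) ^ 2 <= 16 * 16 ^ n.
Proof.
case: n => [|[|n]] // _.
have := bin_center_sqr_le (isT : 1 < n.+2).
set c := 'C(_, _); set Q := 32 * _ + _ + 1; set P := 16 ^ _ => bound.
have Q_gt0 : 0 < Q by rewrite /Q addn1.
rewrite -(leq_pmul2r Q_gt0); apply: (@leq_trans (2 * n.+2 * (256 * n.+2 * P))).
  by rewrite (_ : _ * Q = 2 * n.+2 * (25 * c ^ 2 * Q)) ?leq_mul2l ?bound ?orbT //; ring.
rewrite (_ : 2 * _ * _ = 512 * n.+2 ^ 2 * P); last by ring.
by rewrite [X in _ <= X]mulnAC leq_mul2r /Q; apply/orP; right; lia.
Qed.

Lemma bin_half_bound s : 0 < s -> 25 * s * 'C(s, s./2) ^ 2 <= 16 * 4 ^ s.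
Proof.
have := odd_double_half s; set n := s./2; clearbody n.
case: (odd s) => <- s_gt0; rewrite ?add0n ?add1n in s_gt0 *.
  have bin_odd : 'C(n.*2.+2, n.+1) = 2 * 'C(n.*2.+1, n).
    rewrite binS mul2n -[in RHS]addnn; congr (_ + _).
    by rewrite -[in RHS]bin_sub; [congr binomial | ]; rewrite -addnn; lia.
  have := bin_center_bound (ltn0Sn n).
  rewrite doubleS bin_odd (_ : 16 ^ n.+1 = 4 * 4 ^ n.*2.+1); last first.
    by rewrite -expnS -doubleS -mul2n expnM.
  by rewrite -addnn; nia.
rewrite double_gt0 in s_gt0; have := bin_center_bound s_gt0.
by rewrite -mul2n mulnA expnM.
Qed.

Lemma fiber_card_le_add_bin_half s K (x y : 'I_K) :
  fiber_card s x <= fiber_card s y + 'C(s, s./2).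
Proof.
have bin_up := @leq_bin_below_half s; have bin_dn := @leq_bin_above_half s.
have lt_xK := ltn_ord x; have lt_yK := ltn_ord y.
rewrite (fiber_card_sum_bin x (ltnSn s)); case: (leqP x y) => [le_xy | lt_yx].
  rewrite (fiber_card_sum_bin y (ltnSn s)).
  apply: (@sum_interleaved_le (binomial s) _ bin_up bin_dn
    (fun k => x + k * K) (fun k => y + k * K)) => k.
  by rewrite mulSn; apply/andP; split; lia.
have interleaved k : x + k * K <= y + k.+1 * K <= x + k.+1 * K.
  by rewrite !mulSn; apply/andP; split; lia.
apply: leq_trans (@sum_interleaved_le (binomial s) _ bin_up bin_dn
  (fun k => x + k * K) (fun k => y + k.+1 * K) interleaved s.+1) _.
rewrite (fiber_card_sum_bin y (leqnSn s.+1)) leq_add2r [X in _ <= X]big_ord_recl.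
exact: leq_addl.
Qed.

Lemma exp2_le_mul_fiber s K (y : 'I_K) :
  2 ^ s <= K * (fiber_card s y + 'C(s, s./2)).
Proof.
have K_gt0 : 0 < K := leq_ltn_trans (leq0n y) (ltn_ord y).
rewrite -(sum_fiber_card s K_gt0) -[K in K * _]card_ord -sum_nat_const.
by apply: leq_sum => z _; apply: fiber_card_le_add_bin_half.
Qed.

Local Open Scope ring_scope.

Lemma bin_half_mul_sqrt_le (R : rcfType) K s (y : 'I_K) : (K ^ 2 <= s)%N ->
  'C(s, s./2)%:R * Num.sqrt (s%:R : R) <= 4 * K%:R * (fiber_card s y)%:R.
Proof.
move=> le_K2s; set M := 'C(s, s./2); set N := fiber_card s y.
set r := Num.sqrt (s%:R : R).
have s_gt0 : (0 < s)%N.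
  by apply: leq_trans le_K2s; rewrite expn_gt0 (leq_ltn_trans (leq0n y) (ltn_ord y)).
have r_ge0 : 0 <= r by apply: sqrtr_ge0.
have sqr_r : r ^+ 2 = s%:R by rewrite sqr_sqrtr ?ler0n.
have K_le_r : K%:R <= r.
  by rewrite -(@ler_pXn2r _ 2) ?nnegrE ?ler0n // sqr_r -natrX ler_nat.
have central : 5 * M%:R * r <= 4 * (2 ^ s)%:R.
  rewrite -(@ler_pXn2r _ 2) ?nnegrE ?mulr_ge0 ?ler0n // !exprMn sqr_r -!natrX.
  rewrite -!natrM ler_nat -expnM (mulnC s) expnM mulnAC.
  exact: bin_half_bound.
have total : (2 ^ s)%:R <= K%:R * (N%:R + M%:R) :> R.
  by rewrite -natrD -natrM ler_nat exp2_le_mul_fiber.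
have : K%:R * M%:R <= r * M%:R by rewrite ler_wpM2r ?ler0n.
rewrite mulrDr in total; lra.
Qed.

Theorem lemma5 (R : rcfType) (K s : nat) (hK : (1 <= K)%N) (hs : (1 <= s)%N)
  (hsK : (K ^ 2 <= s)%N) (x y : 'I_K) :
  (fiber_card s x)%:R <=
    (1 + 4 * (K%:R / Num.sqrt (s%:R : R))) * (fiber_card s y)%:R.
Proof.
have sqrt_s_gt0 : 0 < Num.sqrt (s%:R : R) by rewrite sqrtr_gt0 ltr0n.
have := fiber_card_le_add_bin_half s x y; rewrite -(ler_nat R) natrD => le_xy.
rewrite mulrDl mul1r (le_trans le_xy) // lerD2l mulrA mulrAC ler_pdivlMr //.
exact: bin_half_mul_sqrt_le.
Qed.
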